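(* Let $S$ be a semibounded relation in $\mathfrak H$ with lower bound $\gamma\in\mathbb R$, let $c\le\gamma$, and let $Q_c$ (into $\mathfrak K_c$) be a representing map for $\mathfrak t(S)-c$ with companion relation $J_c$. For a relation $H$ in $\mathfrak H$ the following are equivalent: (i) $H$ is a selfadjoint extension of $S$, bounded below by $c$, with $\mathfrak t_{S_{\rm F}}\subset\mathfrak t_H\subset\mathfrak t_{S_{{\rm K},c}}$; (ii) $H=c+R_c^*R_c^{**}$ for some operator $R_c$ from $\mathfrak H$ to $\mathfrak K_c$ satisfying $Q_c\subset R_c\subset(J_c^* )_{\rm reg}$.
   Context: Linear relations are linear subspaces of $\mathfrak H\times\mathfrak K$; $T^*$ adjoint, $T^{**}$ closure; products $RT=\{\{f,h\}:\exists g,\{f,g\}\in T,\{g,h\}\in R\}$; $c+T=\{\{f,g+cf\}:\{f,g\}\in T\}$; for closed $T$, $T_{\rm reg}=\{\{f,(I-\pi)g\}:\{f,g\}\in T\}$ with $\pi$ the projection onto $\mathrm{mul}\,T$. $S$ semibounded with lower bound $\gamma$: $\gamma$ is the supremum of $c$ with $(\varphi',\varphi)\ge c\|\varphi\|^2$ on $S$; $\mathfrak t(S)[\varphi,\psi]=(\varphi',\psi)$ on $\mathrm{dom}\,S$. A representing map for $\mathfrak t(S)-c$ is a linear operator $Q_c$ into a Hilbert space $\mathfrak K_c$ with $\mathrm{dom}\,Q_c=\mathrm{dom}\,S$ and $\mathfrak t(S)[\varphi,\psi]=c(\varphi,\psi)+(Q_c\varphi,Q_c\psi)$; companion relation $J_c=\{\{Q_c\varphi,\varphi'-c\varphi\}:\{\varphi,\varphi'\}\in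 S\}$. Friedrichs extension $S_{\rm F}=c+Q_c^*Q_c^{**}$, Kreĭn type extension $S_{{\rm K},c}=c+J_c^{**}J_c^*$. For a semibounded selfadjoint relation $H$, $\mathfrak t_H$ is its associated closed form (closure of $\mathfrak t(H)[\varphi,\psi]=(\varphi',\psi)$ on $\mathrm{dom}\,H$). Form inclusion $\mathfrak t_1\subset\mathfrak t_2$ means $\mathfrak t_2$ extends $\mathfrak t_1$. *)

From HB Require Import structures.
From mathcomp Require Import all_boot all_order all_algebra.
From mathcomp Require Import complex.
From mathcomp Require Import reals.
Set Implicit Arguments. Unset Strict Implicit. Unset Printing Implicit Defensive.
Import Order.TTheory GRing.Theory Num.Theory.
Local Open Scope ring_scope.
Local Open Scope complex_scope.

Section Defs.
Variable R : realType.
Local Notation C := R[i].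

Definition cvg_in (V : lmodType C) (ip : V -> V -> C) (u : nat -> V) (x : V) :=
  forall e : R, 0 < e -> exists N : nat, forall n, (N <= n)%N ->
    ip (u n - x) (u n - x) < e%:C.

Definition cauchy_in (V : lmodType C) (ip : V -> V -> C) (u : nat -> V) :=
  forall e : R, 0 < e -> exists N : nat, forall n m, (N <= n)%N -> (N <= m)%N ->
    ip (u n - u m) (u n - u m) < e%:C.

Definition is_hilbert (V : lmodType C) (ip : V -> V -> C) :=
  [/\ (forall (a : C) x y z, ip (a *: x + y) z = a * ip x z + ip y z),
      (forall x y, ip y x = (ip x y)^*),
      (forall x, 0 <= ip x x),
      (forall x, ip x x = 0 -> x = 0)
    & (forall u, cauchy_in ip u -> exists x, cvg_in ip u x)].

Definition lrel (A B : Type) := A -> B -> Prop.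

Definition linrel (A B : lmodType C) (T : lrel A B) :=
  [/\ T 0 0,
      (forall f g f' g', T f g -> T f' g' -> T (f + f') (g + g'))
    & (forall (a : C) f g, T f g -> T (a *: f) (a *: g))].

Definition relsub (A B : Type) (T1 T2 : lrel A B) := forall f g, T1 f g -> T2 f g.
Definition releq (A B : Type) (T1 T2 : lrel A B) := forall f g, T1 f g <-> T2 f g.

Definition rdom (A B : Type) (T : lrel A B) : A -> Prop := fun f => exists g, T f g.
Definition rmul (A B : lmodType C) (T : lrel A B) : B -> Prop := fun g => T 0 g.

Definition operator (A B : lmodType C) (T : lrel A B) :=
  linrel T /\ forall g, T 0 g -> g = 0.

Definition adj (A B : lmodType C) (ipA : A -> A -> C) (ipB : B -> B -> C)
  (T : lrel A B) : lrel B A :=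
  fun h k => forall f g, T f g -> ipB g h = ipA f k.

Definition rcomp (A B D : Type) (Rr : lrel B D) (T : lrel A B) : lrel A D :=
  fun f h => exists g, T f g /\ Rr g h.

Definition radd (A : lmodType C) (c : R) (T : lrel A A) : lrel A A :=
  fun f k => exists g, T f g /\ k = g + c%:C *: f.

(* T_reg = {{f, (I - pi) g}}, pi = orthogonal projection onto mul T
   (characterized: p in mul T and g - p orthogonal to mul T) *)
Definition rreg (A B : lmodType C) (ipB : B -> B -> C) (T : lrel A B) : lrel A B :=
  fun f k => exists g p, [/\ T f g, rmul T p, k = g - p
                          & forall m, rmul T m -> ipB k m = 0].

Definition bounded_below_by (A : lmodType C) (ip : A -> A -> C) (T : lrel A A) (c : R) :=
  forall f g, T f g -> c%:C * ip f f <= ip g f.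

Definition lower_bound (A : lmodType C) (ip : A -> A -> C) (S : lrel A A) (gamma : R) :=
  (forall c, bounded_below_by ip S c -> c <= gamma) /\
  (forall b, (forall c, bounded_below_by ip S c -> c <= b) -> gamma <= b).

Definition selfadjoint (A : lmodType C) (ip : A -> A -> C) (T : lrel A A) :=
  releq T (adj ip ip T).

Definition representing_map (A K : lmodType C) (ipA : A -> A -> C) (ipK : K -> K -> C)
  (S : lrel A A) (c : R) (Q : lrel A K) :=
  [/\ operator Q,
      (forall f, rdom Q f <-> rdom S f)
    & (forall phi phi' psi q q', S phi phi' -> Q phi q -> Q psi q' ->
         ipA phi' psi = c%:C * ipA phi psi + ipK q q')].

Definition companion (A K : lmodType C) (S : lrel A A) (c : R) (Q : lrel A K) : lrel K A :=
  fun q k => exists phi phi', [/\ S phi phi', Q phi q & k = phi' - c%:C *: phi].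

(* A form is represented by its graph: t phi psi z  <->  phi, psi in dom t and t[phi,psi] = z. *)
Definition form (A : Type) := A -> A -> C -> Prop.

Definition form_sub (A : Type) (t1 t2 : form A) := forall phi psi z, t1 phi psi z -> t2 phi psi z.

Definition tapprox (A : lmodType C) (ip : A -> A -> C) (T : lrel A A)
  (u u' : nat -> A) (phi : A) :=
  [/\ forall n, T (u n) (u' n),
      cvg_in ip u phi
    & forall e : R, 0 < e -> exists N : nat, forall n m, (N <= n)%N -> (N <= m)%N ->
        `|ip (u' n - u' m) (u n - u m)| < e%:C].

(* t_T : the closure of the form t(T)[phi,psi] = (phi',psi) on dom T *)
Definition tclos (A : lmodType C) (ip : A -> A -> C) (T : lrel A A) : form A :=
  fun phi psi z => exists u u' v v', [/\ tapprox ip T u u' phi, tapprox ip T v v' psi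
    & forall e : R, 0 < e -> exists N : nat, forall n, (N <= n)%N ->
        `|ip (u' n) (v n) - z| < e%:C].

Definition friedrichs (A K : lmodType C) (ipA : A -> A -> C) (ipK : K -> K -> C)
  (c : R) (Q : lrel A K) : lrel A A :=
  radd c (rcomp (adj ipA ipK Q) (adj ipK ipA (adj ipA ipK Q))).

Definition krein (A K : lmodType C) (ipA : A -> A -> C) (ipK : K -> K -> C)
  (c : R) (J : lrel K A) : lrel A A :=
  radd c (rcomp (adj ipA ipK (adj ipK ipA J)) (adj ipK ipA J)).

End Defs.

(* (ii) => (i): for a closed operator T, the relation c + T^*T is selfadjoint
   and bounded below by c, and every value of its closed form is
   c(phi,psi) + (T_reg phi, T_reg psi) (this is [rreg_form]).  With
   T = R_c^** this form lies between the closure of t(S) (as Q^** is the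
   closure of Q, whose domain is dom S) and the form of the Krein type
   extension, which is the same expression for T = J_c^*, whose regular part
   extends R_c.
   (i) => (ii): take for R_c the regular part of J_c^* restricted to dom H.
   The inclusion t_H in t_{S_K,c} turns (H f, g) - c(f,g) into
   (R_c f, R_c g), so H is contained in c + R_c^* R_c^**; a selfadjoint
   relation contained in a symmetric one equals it. *)

From Pilot Require Import Defs.
From mathcomp Require Import all_boot all_order all_algebra.
From mathcomp Require Import complex reals ring lra.
From mathcomp Require boolp classical_sets.
Set Implicit Arguments. Unset Strict Implicit. Unset Printing Implicit Defensive.
Import Order.TTheory GRing.Theory Num.Theory Normc.
Local Open Scope ring_scope.
Local Open Scope complex_scope.

Section ComplexNorm.
Variable R : realType.
Implicit Types (z : R[i]) (r : R).

Lemma normCE z : `|z| = (normc z)%:C.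
Proof. by case: z. Qed.

Lemma conj_realC r : (r%:C)^*%R = r%:C.
Proof. exact: conjc_real. Qed.

Lemma normc_ge0 z : 0 <= normc z.
Proof. by case: z => a b /=; rewrite sqrtr_ge0. Qed.

Lemma normc_real r : normc r%:C = `|r|.
Proof. by rewrite /= expr0n addr0 sqrtr_sqr. Qed.

Lemma normc_conj z : normc z^*%R = normc z.
Proof. by apply: complexI; rewrite -!normCE; exact: normcJ. Qed.

Lemma ltC_normc z r : (`|z| < r%:C) = (normc z < r).
Proof. by rewrite normCE ltcR. Qed.

End ComplexNorm.

Section ScalarLimits.
Variable R : realType.

Definition cvgC (a : nat -> R[i]) (l : R[i]) := forall e : R, 0 < e ->
  exists N, forall n, (N <= n)%N -> normc (a n - l) < e.

Definition cvgR (a : nat -> R) (l : R) := forall e : R, 0 < e ->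
  exists N, forall n, (N <= n)%N -> `|a n - l| < e.

Lemma cvgC_cst l : cvgC (fun _ => l) l.
Proof. by move=> e e0; exists 0%N => n _; rewrite subrr normc0. Qed.

Lemma eq_cvgC a b l : a =1 b -> cvgC a l -> cvgC b l.
Proof. by move=> eab H e /H [N hN]; exists N => n; rewrite -eab; apply: hN. Qed.

Lemma cvgC_unique a l1 l2 : cvgC a l1 -> cvgC a l2 -> l1 = l2.
Proof.
move=> h1 h2; apply/eqP; rewrite -subr_eq0; apply/eqP/eq0_normc/eqP.
rewrite eq_le normc_ge0 andbT.
rewrite leNgt; apply/negP => pos.
have p2 : 0 < normc (l1 - l2) / 2%:R by apply: divr_gt0.
have [N1 hN1] := h1 _ p2; have [N2 hN2] := h2 _ p2.
set n := maxn N1 N2.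
have b1 := hN1 n (leq_maxl _ _); have b2 := hN2 n (leq_maxr _ _).
have := le_normcD (l1 - a n) (a n - l2).
rewrite -normcN opprB in b1.
have -> : l1 - a n + (a n - l2) = l1 - l2 by ring.
have h2r : normc (l1 - l2) / 2%:R * 2%:R = normc (l1 - l2) by rewrite divfK // pnatr_eq0.
lra.
Qed.

Lemma cvgCD a b l m : cvgC a l -> cvgC b m -> cvgC (fun n => a n + b n) (l + m).
Proof.
move=> ha hb e e0.
have e2 : 0 < e / 2%:R by apply: divr_gt0 => //; rewrite ltr0n.
have [N1 h1] := ha _ e2; have [N2 h2] := hb _ e2.
exists (maxn N1 N2) => n; rewrite geq_max => /andP[/h1 b1 /h2 b2].
have -> : a n + b n - (l + m) = (a n - l) + (b n - m) by ring.
have := le_normcD (a n - l) (b n - m).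
have h2r : e / 2%:R * 2%:R = e by rewrite divfK // pnatr_eq0.
lra.
Qed.

Lemma cvgCMl a l s : cvgC a l -> cvgC (fun n => s * a n) (s * l).
Proof.
move=> ha e e0.
have s1 : 0 < normc s + 1 by have := normc_ge0 s; lra.
have [N h1] := ha _ (divr_gt0 e0 s1).
exists N => n /h1 b1; rewrite -mulrBr normcM.
have h1r : e / (normc s + 1) * (normc s + 1) = e by rewrite divfK // gt_eqF.
have := normc_ge0 (a n - l); have := normc_ge0 s.
move: (normc s) (normc (a n - l)) b1 h1r => x y; nra.
Qed.

Lemma cvgR_ge (r : nat -> R) l d : cvgR r l -> (forall n, d <= r n) -> d <= l.
Proof.
move=> h hd; rewrite leNgt; apply/negP => ld.
have dl : 0 < d - l by rewrite subr_gt0.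
have [N hN] := h _ dl.
by have := hN N (leqnn N); have := hd N; move: (r N) => x; rewrite ltr_norml; lra.
Qed.

Lemma cvgR_le (r : nat -> R) l d : cvgR r l ->
  (forall e, 0 < e -> exists N, forall n, (N <= n)%N -> r n < d + e) -> l <= d.
Proof.
move=> h hd; rewrite leNgt; apply/negP => ld.
have e2 : 0 < (l - d) / 2%:R by apply: divr_gt0; rewrite ?subr_gt0 ?ltr0n.
have [N1 h1] := h _ e2; have [N2 h2] := hd _ e2.
have := h1 (maxn N1 N2) (leq_maxl _ _); have := h2 (maxn N1 N2) (leq_maxr _ _).
have h2r : (l - d) / 2%:R * 2%:R = l - d by rewrite divfK // pnatr_eq0.
by move: (r (maxn N1 N2)) => x; rewrite ltr_norml; lra.
Qed.

Lemma invSn_small (e : R) : 0 < e -> exists N, forall n, (N <= n)%N -> (n.+1%:R)^-1 < e.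
Proof.
move=> e0; have ie : 0 <= e^-1 by rewrite invr_ge0 ltW.
have := @archi_boundP _ (e^-1) ie.
set N := Num.Def.archi_bound _ => hN; exists N => n hn.
have hn' : (N%:R : R) <= n.+1%:R by rewrite ler_nat; apply: leqW.
have p : (0 : R) < n.+1%:R by rewrite ltr0n.
rewrite -[_^-1]mul1r ltr_pdivrMr //.
have ee : e * e^-1 = 1 by rewrite mulfV // gt_eqF.
by move: (e^-1) (N%:R : R) (n.+1%:R : R) hN hn' p ee => a b c; nra.
Qed.

End ScalarLimits.

Section InnerProduct.
Variable R : realType.
Local Notation C := R[i].
Variables (V : lmodType C) (ip : V -> V -> C).
Hypothesis hV : is_hilbert ip.

Lemma ipC x y : ip y x = (ip x y)^*%R.
Proof. by case: hV. Qed.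

Lemma ip0l z : ip 0 z = 0.
Proof.
have [lin _ _ _ _] := hV; have := lin 1 0 0 z.
by rewrite scaler0 addr0 mul1r => /eqP; rewrite addrC -subr_eq subrr eq_sym => /eqP.
Qed.

Lemma ipDl x y z : ip (x + y) z = ip x z + ip y z.
Proof. by have [lin _ _ _ _] := hV; rewrite -[x in LHS]scale1r lin mul1r. Qed.

Lemma ipZl a x z : ip (a *: x) z = a * ip x z.
Proof. by have [lin _ _ _ _] := hV; rewrite -[a *: x]addr0 lin ip0l addr0. Qed.

Lemma ipNl x z : ip (- x) z = - ip x z.
Proof. by rewrite -scaleN1r ipZl mulN1r. Qed.

Lemma ipBl x y z : ip (x - y) z = ip x z - ip y z.
Proof. by rewrite ipDl ipNl. Qed.

Lemma ipDr x y z : ip x (y + z) = ip x y + ip x z.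
Proof. by rewrite ipC ipDl rmorphD /= -!ipC. Qed.

Lemma ipZr x a z : ip x (a *: z) = a^*%R * ip x z.
Proof. by rewrite ipC ipZl rmorphM /= -ipC. Qed.

Lemma ip0r x : ip x 0 = 0.
Proof. by rewrite ipC ip0l rmorph0. Qed.

Lemma ipNr x z : ip x (- z) = - ip x z.
Proof. by rewrite ipC ipNl rmorphN /= -ipC. Qed.

Lemma ipBr x y z : ip x (y - z) = ip x y - ip x z.
Proof. by rewrite ipDr ipNr. Qed.

Definition sqnorm x := complex.Re (ip x x).

Lemma ip_sqnorm x : ip x x = (sqnorm x)%:C.
Proof. by have [_ _ ge0 _ _] := hV; rewrite /sqnorm RRe_real // ger0_real. Qed.

Lemma sqnorm_ge0 x : 0 <= sqnorm x.
Proof. by have [_ _ ge0 _ _] := hV; rewrite -lecR -ip_sqnorm. Qed.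

Lemma sqnorm_eq0 x : sqnorm x = 0 -> x = 0.
Proof. by have [_ _ _ eq0 _] := hV => h; apply: eq0; rewrite ip_sqnorm h. Qed.

Lemma sqnorm0 : sqnorm 0 = 0.
Proof. by rewrite /sqnorm ip0l. Qed.

Lemma sqnormN a : sqnorm (- a) = sqnorm a.
Proof. by rewrite /sqnorm ipNl ipNr opprK. Qed.

Lemma sqnormBC a b : sqnorm (a - b) = sqnorm (b - a).
Proof. by rewrite -sqnormN opprB. Qed.

Lemma sqnormZ s a : sqnorm (s *: a) = normc s ^+ 2 * sqnorm a.
Proof.
apply: complexI; rewrite rmorphM rmorphXn /= -normCE normCK -!ip_sqnorm ipZl ipZr.
by rewrite mulrA.
Qed.

Lemma sqnorm_parallelogram a b :
  sqnorm (a + b) + sqnorm (a - b) = 2%:R * sqnorm a + 2%:R * sqnorm b.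
Proof.
apply: complexI; rewrite !rmorphD !rmorphM /= -!ip_sqnorm.
by rewrite !(ipDl, ipDr, ipNl, ipNr) rmorph_nat opprK; ring.
Qed.

Lemma sqnormD_le a b : sqnorm (a + b) <= 2%:R * sqnorm a + 2%:R * sqnorm b.
Proof. by rewrite -sqnorm_parallelogram lerDl sqnorm_ge0. Qed.

Lemma cauchy_schwarz x y : normc (ip x y) ^+ 2 <= sqnorm x * sqnorm y.
Proof.
rewrite -lecR rmorphXn rmorphM /= -normCE -!ip_sqnorm.
have [->|y0] := eqVneq y 0; first by rewrite ip0r ip0l normr0 expr0n mulr0.
set q := ip y y; set p := ip x y.
have q0 : 0 < q.
  by rewrite /q ip_sqnorm ltcR lt_def sqnorm_ge0 andbT; apply: contra y0 => /eqP/sqnorm_eq0 ->.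
have qc : q^*%R = q by rewrite /q ip_sqnorm conj_realC.
have : 0 <= ip (x - (p / q) *: y) (x - (p / q) *: y).
  by rewrite ip_sqnorm ler0c sqnorm_ge0.
rewrite !(ipBl, ipBr, ipZl, ipZr) -/q -/p (ipC x y) -/p rmorphM /= fmorphV /= qc.
set E := (X in 0 <= X -> _).
have -> : E = ip x x - p * p^*%R / q by rewrite /E; field; rewrite gt_eqF.
by rewrite -sqr_normc subr_ge0 ler_pdivrMr.
Qed.

Lemma normc_ip_small (e B : R) : 0 < e -> 0 <= B -> exists2 d : R, 0 < d &
  forall a b, sqnorm a < d -> sqnorm b <= B -> normc (ip a b) < e.
Proof.
move=> e0 B0; exists (e ^+ 2 / (B + 1)).
  by apply: divr_gt0; [exact: exprn_gt0 | lra].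
move=> a b ha hb; have := cauchy_schwarz a b; have := normc_ge0 (ip a b).
have := sqnorm_ge0 a; have := sqnorm_ge0 b.
set d := e ^+ 2 / (B + 1) in ha *.
have hd : d * (B + 1) = e ^+ 2 by rewrite /d divfK //; lra.
by move: (sqnorm a) (sqnorm b) (normc (ip a b)) ha hb hd => x y z; nra.
Qed.

End InnerProduct.

Section Limits.
Variable R : realType.
Local Notation C := R[i].
Variables (V : lmodType C) (ip : V -> V -> C).
Hypothesis hV : is_hilbert ip.
Local Notation sqnorm := (sqnorm ip).

Definition cvgV (u : nat -> V) (x : V) := forall e : R, 0 < e ->
  exists N, forall n, (N <= n)%N -> sqnorm (u n - x) < e.

Definition cauchyV (u : nat -> V) := forall e : R, 0 < e ->
  exists N, forall n m, (N <= n)%N -> (N <= m)%N -> sqnorm (u n - u m) < e.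

Lemma cvg_inP u x : cvg_in ip u x <-> cvgV u x.
Proof. by split=> h e /h [N hN]; exists N => n /hN; rewrite (ip_sqnorm hV) ltcR. Qed.

Lemma cvgV_complete u : cauchyV u -> exists x, cvgV u x.
Proof.
move=> h; case: hV => _ _ _ _ /(_ u) []; last by move=> x /cvg_inP; exists x.
by move=> e /h [N hN]; exists N => n m hn hm; rewrite (ip_sqnorm hV) ltcR hN.
Qed.

Lemma cvgV_cauchy u x : cvgV u x -> cauchyV u.
Proof.
move=> hu e e0.
have e4 : 0 < e / 4%:R by apply: divr_gt0 => //; rewrite ltr0n.
have [N hN] := hu _ e4.
exists N => n m /hN h1 /hN h2.
have -> : u n - u m = (u n - x) + (x - u m) by rewrite addrA subrK.
apply: le_lt_trans (sqnormD_le hV _ _) _; rewrite (sqnormBC hV x).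
have h4 : e / 4%:R * 4%:R = e by rewrite divfK // pnatr_eq0.
lra.
Qed.

Lemma cvgV_cst x : cvgV (fun _ => x) x.
Proof. by move=> e e0; exists 0%N => n _; rewrite subrr (sqnorm0 hV). Qed.

Lemma cvgVD u x v y : cvgV u x -> cvgV v y -> cvgV (fun n => u n + v n) (x + y).
Proof.
move=> hu hv e e0.
have e4 : 0 < e / 4%:R by apply: divr_gt0 => //; rewrite ltr0n.
have [N1 h1] := hu _ e4; have [N2 h2] := hv _ e4.
exists (maxn N1 N2) => n; rewrite geq_max => /andP[/h1 b1 /h2 b2].
have -> : u n + v n - (x + y) = (u n - x) + (v n - y) by rewrite opprD addrACA.
have := sqnormD_le hV (u n - x) (v n - y).
have h4 : e / 4%:R * 4%:R = e by rewrite divfK // pnatr_eq0.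
lra.
Qed.

Lemma cvgVB u x v y : cvgV u x -> cvgV v y -> cvgV (fun n => u n - v n) (x - y).
Proof.
move=> hu hv; apply: cvgVD hu _ => e /hv [N hN].
by exists N => n; rewrite -opprD (sqnormN hV); apply: hN.
Qed.

Lemma ip_cvg u x v y : cvgV u x -> cvgV v y -> cvgC (fun n => ip (u n) (v n)) (ip x y).
Proof.
move=> hu hv e e0.
have e30 : 0 < e / 3%:R by apply: divr_gt0 => //; rewrite ltr0n.
have [d1 d10 H1] := normc_ip_small hV e30 (@ler01 R).
have [d2 d20 H2] := normc_ip_small hV e30 (sqnorm_ge0 hV y).
have [d3 d30 H3] := normc_ip_small hV e30 (sqnorm_ge0 hV x).
have m1 : 0 < Order.min d1 d2 by rewrite lt_min d10 d20.
have m2 : 0 < Order.min (Order.min 1 d1) d3 by rewrite !lt_min ltr01 d10 d30.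
have [N1 hN1] := hu _ m1; have [N2 hN2] := hv _ m2.
exists (maxn N1 N2) => n; rewrite geq_max => /andP[/hN1 + /hN2].
rewrite !lt_min => /andP[h1 h1'] /andP[/andP[h2 h2'] h2''].
have -> : ip (u n) (v n) - ip x y = ip (u n - x) (v n - y) + ip (u n - x) y
   + (ip (v n - y) x)^*%R.
  by rewrite -(ipC hV) !(ipBl hV, ipBr hV); ring.
have t1 := H1 _ _ h1 (ltW h2); have t2 := H2 _ _ h1' (lexx _).
have t3 := H3 _ _ h2'' (lexx _); rewrite -(normc_conj (ip _ _)) in t3.
have := le_normcD (ip (u n - x) (v n - y) + ip (u n - x) y) (ip (v n - y) x)^*%R.
have := le_normcD (ip (u n - x) (v n - y)) (ip (u n - x) y).
have h3 : e / 3%:R * 3%:R = e by rewrite divfK // pnatr_eq0.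
lra.
Qed.

Lemma ip_cvgl u x y : cvgV u x -> cvgC (fun n => ip (u n) y) (ip x y).
Proof. by move=> hu; apply: ip_cvg hu (cvgV_cst y). Qed.

Lemma ip_cvgr u x y : cvgV u x -> cvgC (fun n => ip y (u n)) (ip y x).
Proof. by move=> hu; apply: ip_cvg (cvgV_cst y) hu. Qed.

Lemma ip_lim_eq0 u x m : cvgV u x -> (forall n, ip (u n) m = 0) -> ip x m = 0.
Proof.
move=> hu h0; apply: (cvgC_unique (ip_cvgl m hu)).
by apply: eq_cvgC (cvgC_cst 0) => n; rewrite h0.
Qed.

Lemma sqnorm_cvg u x : cvgV u x -> cvgR (fun n => sqnorm (u n)) (sqnorm x).
Proof.
move=> hu e e0; have [N hN] := ip_cvg hu hu e0; exists N => n /hN.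
by rewrite !(ip_sqnorm hV) -rmorphB normc_real.
Qed.

(* Minimality at t = s (g, x), s = 1 / (|x|^2 + 1), gives s |(g, x)|^2 (1 + s) <= 0. *)
Lemma sqnorm_min_orthogonal g x :
  (forall t : C, sqnorm g <= sqnorm (g - t *: x)) -> ip g x = 0.
Proof.
move=> hmin; set w := ip g x; set s : R := (sqnorm x + 1)^-1.
have X0 := sqnorm_ge0 hV x.
have s0 : 0 < s by rewrite invr_gt0; lra.
have s1 : s * (sqnorm x + 1) = 1 by rewrite mulVf // gt_eqF //; lra.
have hw : (normc w ^+ 2)%:C = w * w^*%R by rewrite rmorphXn /= -normCE normCK.
have expand : sqnorm (g - (s%:C * w) *: x) =
    sqnorm g - 2%:R * s * normc w ^+ 2 + s ^+ 2 * normc w ^+ 2 * sqnorm x.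
  move: (normc w ^+ 2) hw => W hw; apply: complexI.
  rewrite rmorphD rmorphB !rmorphM /= hw rmorph_nat -!(ip_sqnorm hV).
  rewrite !(ipBl hV, ipBr hV, ipZl hV, ipZr hV) (ipC hV g x) -/w rmorphM /= conj_realC.
  ring.
have := hmin (s%:C * w); rewrite expand.
have W0 := sqr_ge0 (normc w); set W := normc w ^+ 2 => hle.
have sW : s * W <= 0.
  have e1 : s ^+ 2 * W * sqnorm x = s * W * (1 - s) by rewrite -s1; ring.
  by rewrite e1 in hle; have := mulr_ge0 (ltW s0) (mulr_ge0 (ltW s0) W0); nra.
have W00 : W = 0 by apply/eqP; rewrite eq_le W0 andbT -(pmulr_rle0 _ s0).
by apply: eq0_normc; move/eqP: W00; rewrite sqrf_eq0 => /eqP.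
Qed.

Lemma sqnormB_le_near_min h a b (d e1 e2 : R) :
  d <= sqnorm (h - (2%:R : C)^-1 *: (a + b)) ->
  sqnorm (h - a) < d + e1 -> sqnorm (h - b) < d + e2 ->
  sqnorm (a - b) <= 2%:R * e1 + 2%:R * e2.
Proof.
move=> hmid ha hb; have := sqnorm_parallelogram hV (h - a) (h - b).
have two0 : (2%:R : C) != 0 by rewrite pnatr_eq0.
have -> : h - a + (h - b) = (2%:R : C) *: (h - (2%:R : C)^-1 *: (a + b)).
  by rewrite scalerBr scalerA mulfV // scale1r scaler_nat mulr2n opprD addrACA.
have -> : h - a - (h - b) = b - a by rewrite opprB addrC addrA subrK.
rewrite (sqnormZ hV) (sqnormBC hV b a).
have -> : normc (2%:R : C) = 2%:R.
  by rewrite -(rmorph_nat (real_complex R)) normc_real ger0_norm.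
lra.
Qed.

Lemma exists_minimizing_seq (M : V -> Prop) h : M 0 -> exists (d : R) (u : nat -> V),
  [/\ forall x, M x -> d <= sqnorm (h - x), forall n, M (u n)
    & forall n, sqnorm (h - u n) < d + (n.+1%:R)^-1].
Proof.
move=> M0; pose E : classical_sets.set R := fun r => exists2 x, M x & r = sqnorm (h - x).
have hE : classical_sets.has_inf E.
  split; first by exists (sqnorm (h - 0)), 0.
  by exists 0 => r [x _ ->]; exact: sqnorm_ge0.
have near n : exists x, M x /\ sqnorm (h - x) < reals.inf E + (n.+1%:R)^-1.
  have pos : 0 < (n.+1%:R : R)^-1 by rewrite invr_gt0 ltr0Sn.
  by have [r [x Mx ->] lt] := reals.inf_adherent pos hE; exists x.
exists (reals.inf E), (fun n => proj1_sig (boolp.cid (near n))); split.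
- by move=> x Mx; apply: (reals.ge_inf (proj2 hE)); exists x.
- by move=> n; case: (boolp.cid _) => x [].
- by move=> n; case: (boolp.cid _) => x [].
Qed.

Lemma orthogonal_projection (M : V -> Prop) : M 0 ->
  (forall x y, M x -> M y -> M (x + y)) -> (forall a x, M x -> M (a *: x)) ->
  forall h, exists a (u : nat -> V),
    [/\ forall n, M (u n), cvgV u a & forall x, M x -> ip (h - a) x = 0].
Proof.
move=> M0 MD MZ h.
have [d [u [hd Mu du]]] := exists_minimizing_seq h M0.
have [a ha] : exists a, cvgV u a.
  apply: cvgV_complete => e e0.
  have e4 : 0 < e / 4%:R by apply: divr_gt0 => //; rewrite ltr0n.
  have [N hN] := invSn_small e4; exists N => n m /hN hn /hN hm.
  apply: le_lt_trans (sqnormB_le_near_min (hd _ _) (du n) (du m)) _.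
    by apply: MZ; apply: MD.
  have h4 : e / 4%:R * 4%:R = e by rewrite divfK // pnatr_eq0.
  by move: (n.+1%:R^-1 : R) (m.+1%:R^-1 : R) hn hm => i j; lra.
exists a, u; split => // x Mx; apply: sqnorm_min_orthogonal => t.
have dist_le : sqnorm (h - a) <= d.
  apply: (cvgR_le (sqnorm_cvg (cvgVB (cvgV_cst h) ha))) => e e0.
  have [N hN] := invSn_small e0; exists N => n /hN hn; have := du n.
  by move: (n.+1%:R^-1 : R) hn => i; lra.
apply: le_trans dist_le _; rewrite -addrA -opprD.
apply: (cvgR_ge (sqnorm_cvg (cvgVB (cvgV_cst h) (cvgVD ha (cvgV_cst (t *: x)))))).
by move=> n; apply: hd; apply: MD => //; apply: MZ.
Qed.

End Limits.

Section PairSpace.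
Variable R : realType.
Local Notation C := R[i].
Variables (V W : lmodType C) (ipV : V -> V -> C) (ipW : W -> W -> C).
Hypotheses (hV : is_hilbert ipV) (hW : is_hilbert ipW).

Definition ip_pair (p q : V * W) := ipV p.1 q.1 + ipW p.2 q.2.

Lemma ip_pair_diag p : ip_pair p p = (sqnorm ipV p.1 + sqnorm ipW p.2)%:C.
Proof. by rewrite /ip_pair (ip_sqnorm hV) (ip_sqnorm hW) rmorphD. Qed.

Lemma sqnorm_pair p : sqnorm ip_pair p = sqnorm ipV p.1 + sqnorm ipW p.2.
Proof. by rewrite /sqnorm ip_pair_diag. Qed.

Lemma is_hilbert_pair : is_hilbert ip_pair.
Proof.
have [linV _ _ _ _] := hV; have [linW _ _ _ _] := hW.
split.
- by move=> a x y z; rewrite /ip_pair /= linV linW; ring.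
- by move=> x y; rewrite /ip_pair rmorphD /= (ipC hV x.1 y.1) (ipC hW x.2 y.2).
- by move=> x; rewrite ip_pair_diag ler0c addr_ge0 // sqnorm_ge0.
- move=> [x1 x2]; rewrite ip_pair_diag => /complexI /eqP.
  rewrite paddr_eq0 ?sqnorm_ge0 // => /andP[/eqP /(sqnorm_eq0 hV) /= -> /eqP].
  by move=> /(sqnorm_eq0 hW) /= ->.
- move=> u hu.
  have [a1 h1] : exists a, cvgV ipV (fun n => (u n).1) a.
    apply: (cvgV_complete hV) => e /hu [N hN]; exists N => n m /hN H /H.
    by rewrite ip_pair_diag ltcR /=; apply: le_lt_trans; rewrite lerDl sqnorm_ge0.
  have [a2 h2] : exists a, cvgV ipW (fun n => (u n).2) a.
    apply: (cvgV_complete hW) => e /hu [N hN]; exists N => n m /hN H /H.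
    by rewrite ip_pair_diag ltcR /=; apply: le_lt_trans; rewrite lerDr sqnorm_ge0.
  exists (a1, a2) => e e0.
  have e2 : 0 < e / 2%:R by apply: divr_gt0 => //; rewrite ltr0n.
  have [N1 hN1] := h1 _ e2; have [N2 hN2] := h2 _ e2.
  exists (maxn N1 N2) => n; rewrite geq_max => /andP[/hN1 b1 /hN2 b2].
  rewrite ip_pair_diag ltcR /=.
  have h2r : e / 2%:R * 2%:R = e by rewrite divfK // pnatr_eq0.
  lra.
Qed.

End PairSpace.

Definition closed_rel (R : realType) (A B : lmodType R[i]) (ipA : A -> A -> R[i])
  (ipB : B -> B -> R[i]) (T : lrel A B) :=
  forall u v f g, (forall n, T (u n) (v n)) -> cvgV ipA u f -> cvgV ipB v g -> T f g.

Section Relations.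
Variable R : realType.
Local Notation C := R[i].
Variables (A B : lmodType C) (ipA : A -> A -> C) (ipB : B -> B -> C).
Hypotheses (hA : is_hilbert ipA) (hB : is_hilbert ipB).
Implicit Types T : lrel A B.

Lemma linrelB T f g f' g' : linrel T -> T f g -> T f' g' -> T (f - f') (g - g').
Proof.
case=> _ TD TZ h1 h2; apply: TD => //.
by have := TZ (-1) _ _ h2; rewrite !scaleN1r.
Qed.

Lemma releq_linrel T1 T2 : releq T1 T2 -> linrel T1 -> linrel T2.
Proof.
move=> e [T0 TD TZ]; split.
- exact/e.
- by move=> f g f' g' /e h1 /e h2; apply/e; apply: TD.
- by move=> a f g /e h; apply/e; apply: TZ.
Qed.

Lemma graph_projection T : linrel T -> forall h k,
  exists a b (u : nat -> A) (v : nat -> B), [/\ forall n, T (u n) (v n),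
    cvgV ipA u a, cvgV ipB v b &
    forall x y, T x y -> ipA (h - a) x + ipB (k - b) y = 0].
Proof.
case=> T0 TD TZ h k.
have [[a b] [w [Tw cw orth]]] := orthogonal_projection (is_hilbert_pair hA hB)
  (M := fun p => T p.1 p.2) T0 (fun x y => TD _ _ _ _) (fun a x => TZ _ _ _) (h, k).
exists a, b, (fun n => (w n).1), (fun n => (w n).2); split => //.
- move=> e /cw [N hN]; exists N => n /hN; rewrite (sqnorm_pair hA hB) /=.
  by apply: le_lt_trans; rewrite lerDl sqnorm_ge0.
- move=> e /cw [N hN]; exists N => n /hN; rewrite (sqnorm_pair hA hB) /=.
  by apply: le_lt_trans; rewrite lerDr sqnorm_ge0.
- by move=> x y Txy; have := orth (x, y) Txy.
Qed.

Lemma linrel_adj T : linrel (adj ipA ipB T).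
Proof.
split.
- by move=> f g _; rewrite (ip0r hA) (ip0r hB).
- by move=> h k h' k' H1 H2 f g Tfg; rewrite (ipDr hA) (ipDr hB) (H1 _ _ Tfg) (H2 _ _ Tfg).
- by move=> a h k H f g Tfg; rewrite (ipZr hA) (ipZr hB) (H _ _ Tfg).
Qed.

Lemma closed_adj T : closed_rel ipB ipA (adj ipA ipB T).
Proof.
move=> u v h k H hu hv f g Tfg; apply: (cvgC_unique (ip_cvgr hB g hu)).
by apply: eq_cvgC (ip_cvgr hA f hv) => n; rewrite (H n f g Tfg).
Qed.

Lemma sub_adj T1 T2 : relsub T1 T2 -> relsub (adj ipA ipB T2) (adj ipA ipB T1).
Proof. by move=> s h k H f g /s; apply: H. Qed.

Lemma sub_adj_adj T : relsub T (adj ipB ipA (adj ipA ipB T)).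
Proof. by move=> f g Tfg h k H; rewrite (ipC hA f k) (ipC hB g h) (H f g Tfg). Qed.

Lemma adj_orth_mul T h k p : adj ipA ipB T h k -> rmul T p -> ipB p h = 0.
Proof. by move=> H /H ->; rewrite (ip0l hA). Qed.

Lemma rreg_intro T f w : linrel T -> T f w ->
  (forall m, rmul T m -> ipB w m = 0) -> rreg ipB T f w.
Proof. by case=> T0 _ _ Tfw orth; exists w, 0; split; rewrite ?subr0. Qed.

Lemma rreg_sub T : linrel T -> relsub (rreg ipB T) T.
Proof. by move=> lT f w [g [p [Tfg Tp -> _]]]; have := linrelB lT Tfg Tp; rewrite subr0. Qed.

Lemma rreg_orth T f w m : rreg ipB T f w -> rmul T m -> ipB w m = 0.
Proof. by move=> [g [p [_ _ -> H]]] /H. Qed.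

Lemma rreg_uniq T f w1 w2 : linrel T -> rreg ipB T f w1 -> rreg ipB T f w2 -> w1 = w2.
Proof.
move=> lT r1 r2; have m : rmul T (w1 - w2).
  by have := linrelB lT (rreg_sub lT r1) (rreg_sub lT r2); rewrite subrr.
apply/eqP; rewrite -subr_eq0; apply/eqP/(sqnorm_eq0 hB)/complexI.
by rewrite -(ip_sqnorm hB) (ipBl hB) (rreg_orth r1 m) (rreg_orth r2 m) subrr.
Qed.

Lemma rreg_mul0 T w : linrel T -> rreg ipB T 0 w -> w = 0.
Proof.
move=> lT r; apply/(sqnorm_eq0 hB)/complexI.
by rewrite -(ip_sqnorm hB) (rreg_orth r (rreg_sub lT r)).
Qed.

Lemma linrel_rreg T : linrel T -> linrel (rreg ipB T).
Proof.
move=> lT; have [T0 TD TZ] := lT; split.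
- by apply: rreg_intro => // m _; rewrite (ip0l hB).
- move=> f g f' g' r1 r2; apply: rreg_intro => //.
    by apply: TD; apply: rreg_sub.
  by move=> m Tm; rewrite (ipDl hB) (rreg_orth r1 Tm) (rreg_orth r2 Tm) addr0.
- move=> a f g r; apply: rreg_intro => //.
    by apply: TZ; apply: rreg_sub.
  by move=> m Tm; rewrite (ipZl hB) (rreg_orth r Tm) mulr0.
Qed.

Lemma closed_rreg T : linrel T -> closed_rel ipA ipB T -> closed_rel ipA ipB (rreg ipB T).
Proof.
move=> lT cT u v f g H hu hv; apply: rreg_intro => //.
  by apply: (cT u v) => // n; apply: rreg_sub.
by move=> m Tm; apply: (ip_lim_eq0 hB hv) => n; apply: rreg_orth (H n) Tm.
Qed.

Lemma vonNeumann_decomposition T : linrel T -> closed_rel ipA ipB T -> forall h,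
  exists f w y, [/\ T f w, adj ipA ipB T w y & f + y = h].
Proof.
move=> lT cT h; have [a [b [u [v [Tuv ca cb orth]]]]] := graph_projection lT h 0.
exists a, b, (h - a); split; [exact: (cT u v) | | by rewrite addrC subrK].
move=> x y Txy; have /eqP := orth x y Txy.
rewrite sub0r (ipNl hB) addr_eq0 opprK => /eqP e.
by rewrite (ipC hB) (ipC hA) e.
Qed.

(* Project {phi, w} onto the closure of the {u, v} in T with v in dom T^*: the
   remainder lies in T, its first component vanishes by the von Neumann
   decomposition, and its second one is then in mul T, orthogonal to w. *)
Lemma rreg_approx T : linrel T -> closed_rel ipA ipB T -> forall phi w,
  rreg ipB T phi w -> exists u v, [/\ forall n, T (u n) (v n) /\ rdom (adj ipA ipB T) (v n),
    cvgV ipA u phi & cvgV ipB v w].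
Proof.
move=> lT cT phi w rw; have [T0 TD TZ] := lT; have [J0 JD JZ] := linrel_adj T.
pose M x y := T x y /\ rdom (adj ipA ipB T) y.
have lM : linrel M.
  split; first by split => //; exists 0.
  - move=> f g f' g' [h1 [k1 a1]] [h2 [k2 a2]].
    by split; [exact: TD | exists (k1 + k2); exact: JD].
  - by move=> a f g [h1 [k1 a1]]; split; [exact: TZ | exists (a *: k1); exact: JZ].
have [a [b [u [v [Muv ca cb orth]]]]] := graph_projection lM phi w.
have Tab : T a b by apply: (cT u v) => // n; case: (Muv n).
have Tde : T (phi - a) (w - b) by apply: linrelB => //; exact: rreg_sub rw.
have [f [w' [y' [Tfw ay e]]]] := vonNeumann_decomposition lT cT (phi - a).
have d0 : phi - a = 0.
  apply/(sqnorm_eq0 hA)/complexI; rewrite -(ip_sqnorm hA).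
  have := orth f w' (conj Tfw (ex_intro _ y' ay)).
  by rewrite (ay _ _ Tde) -(ipDr hA) e => ->.
have Te : rmul T (w - b) by move: Tde; rewrite d0.
have ob : ipB b (w - b) = 0.
  apply: (ip_lim_eq0 hB cb) => n; case: (Muv n) => _ [k an].
  by rewrite (ipC hB) (adj_orth_mul an Te) rmorph0.
have e0 : w - b = 0.
  apply/(sqnorm_eq0 hB)/complexI; rewrite -(ip_sqnorm hB).
  by rewrite {1}(ipBl hB) (rreg_orth rw Te) ob subrr.
exists u, v; split => //.
- by move/eqP: d0; rewrite subr_eq0 => /eqP ->.
- by move/eqP: e0; rewrite subr_eq0 => /eqP ->.
Qed.

End Relations.

Section DoubleAdjoint.
Variable R : realType.
Local Notation C := R[i].
Variables (A B : lmodType C) (ipA : A -> A -> C) (ipB : B -> B -> C).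
Hypotheses (hA : is_hilbert ipA) (hB : is_hilbert ipB).
Implicit Types T : lrel A B.

Lemma adj_adj_adj T :
  releq (adj ipA ipB (adj ipB ipA (adj ipA ipB T))) (adj ipA ipB T).
Proof.
by move=> h k; split; [apply: sub_adj; exact: sub_adj_adj | exact: (sub_adj_adj hB hA)].
Qed.

Lemma adj_adj_approx T f g : linrel T -> adj ipB ipA (adj ipA ipB T) f g ->
  exists u v, [/\ forall n, T (u n) (v n), cvgV ipA u f & cvgV ipB v g].
Proof.
move=> lT H; have [a [b [u [v [Tuv ca cb orth]]]]] := graph_projection hA hB lT f g.
have Hab : adj ipB ipA (adj ipA ipB T) a b.
  by apply: (closed_adj hB hA (u := u) (v := v)) => // n; exact: (sub_adj_adj hA hB).
have Jhk : adj ipA ipB T (g - b) (a - f).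
  move=> x y Txy; have /eqP := orth x y Txy; rewrite addrC addr_eq0 => /eqP e.
  by rewrite (ipC hB (g - b) y) e rmorphN /= -(ipC hA (f - a) x) -(ipNr hA) opprB.
have z : ipA (a - f) (a - f) + ipB (g - b) (g - b) = 0.
  by rewrite (ipBr hA) (ipBr hB) (H _ _ Jhk) (Hab _ _ Jhk); ring.
move/eqP: z; rewrite (ip_sqnorm hA) (ip_sqnorm hB) -rmorphD => /eqP /complexI /eqP.
rewrite paddr_eq0 ?sqnorm_ge0 //.
move=> /andP[/eqP /(sqnorm_eq0 hA) /eqP + /eqP /(sqnorm_eq0 hB) /eqP].
rewrite !subr_eq0 => /eqP ea /eqP eb.
by exists u, v; rewrite -ea eb.
Qed.

End DoubleAdjoint.

Section Forms.
Variable R : realType.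
Local Notation C := R[i].
Variables (A B : lmodType C) (ipA : A -> A -> C) (ipB : B -> B -> C).
Hypotheses (hA : is_hilbert ipA) (hB : is_hilbert ipB).
Variable c : R.
Implicit Types (T : lrel A B) (X : lrel B A).

(* The closed form of c + T^* T, see [tclos_radd_comp_sub] and [rreg_form_sub_tclos]. *)
Definition rreg_form T : Defs.form R A := fun phi psi z => exists wp wq,
  [/\ rreg ipB T phi wp, rreg ipB T psi wq & z = c%:C * ipA phi psi + ipB wp wq].

Lemma adj_ip_swap T X w g x z : releq X (adj ipA ipB T) ->
  X w g -> T x z -> ipB w z = ipA g x.
Proof. by move=> eX /eX H Txz; rewrite (ipC hB z w) (H _ _ Txz) -(ipC hA). Qed.

Lemma radd_comp_sym T X : releq X (adj ipA ipB T) ->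
  relsub (radd c (rcomp X T)) (adj ipA ipA (radd c (rcomp X T))).
Proof.
move=> eX f k [y [[w [Tfw Xwy]] ->]] f2 k2 [y2 [[w2 [Tfw2 Xwy2]] ->]].
rewrite (ipDl hA) (ipDr hA) (ipZl hA) (ipZr hA) conj_realC.
by rewrite -(adj_ip_swap eX Xwy2 Tfw) (ipC hA y f2) -(adj_ip_swap eX Xwy Tfw2) -(ipC hB).
Qed.

(* For {h, k} in the adjoint, pairing {h - f, k - y - c f} (f, y from the von
   Neumann decomposition of h + k - c h) with the decomposition of h - f shows
   |h - f|^2 = 0. *)
Lemma adj_radd_comp_sub T X : linrel T -> closed_rel ipA ipB T ->
  releq X (adj ipA ipB T) ->
  relsub (adj ipA ipA (radd c (rcomp X T))) (radd c (rcomp X T)).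
Proof.
move=> lT cT eX h k Hhk; set A0 := radd c (rcomp X T) in Hhk *.
have inA0 f w y : T f w -> adj ipA ipB T w y -> A0 f (y + c%:C *: f).
  by move=> Tfw Jwy; exists y; split => //; exists w; split => //; apply/eX.
have [f [w [y [Tfw Jwy e]]]] := vonNeumann_decomposition hA hB lT cT (h + (k - c%:C *: h)).
have Hd := linrelB (linrel_adj hA hA A0) Hhk (radd_comp_sym eX (inA0 _ _ _ Tfw Jwy)).
have hy : y = - f + (h + (k - c%:C *: h)) by rewrite -e addKr.
have [f2 [w2 [y2 [Tfw2 Jwy2 e2]]]] := vonNeumann_decomposition hA hB lT cT (h - f).
have hf : h = f.
  apply/eqP; rewrite -subr_eq0; apply/eqP/(sqnorm_eq0 hA)/complexI.
  rewrite -(ip_sqnorm hA) -{1}e2 (ipDl hA).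
  move: (Hd _ _ (inA0 _ _ _ Tfw2 Jwy2)); rewrite (ipDl hA) (ipZl hA).
  move/(congr1 (fun t => t - c%:C * ipA f2 (h - f))); rewrite addrK => ->.
  rewrite hy !(ipBr hA, ipDr hA, ipNr hA, ipZr hA, ipBl hA, ipDl hA, ipZl hA) conj_realC.
  ring.
exists y; split; last by rewrite hy hf addKr subrK.
by exists w; split; [rewrite hf | apply/eX].
Qed.

Lemma selfadjoint_radd_comp T X : linrel T -> closed_rel ipA ipB T ->
  releq X (adj ipA ipB T) -> selfadjoint ipA (radd c (rcomp X T)).
Proof.
move=> lT cT eX f g; split; first exact: radd_comp_sym.
exact: adj_radd_comp_sub.
Qed.

Lemma radd_comp_bounded_below T X : releq X (adj ipA ipB T) ->
  bounded_below_by ipA (radd c (rcomp X T)) c.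
Proof.
move=> eX f k [y [[w [Tw Xw]] ->]].
rewrite (ipDl hA) (ipZl hA) addrC lerDl -(adj_ip_swap eX Xw Tw).
by rewrite (ip_sqnorm hB) ler0c sqnorm_ge0.
Qed.

Lemma tclos_sub (A1 A2 : lrel A A) : relsub A1 A2 -> form_sub (tclos ipA A1) (tclos ipA A2).
Proof.
move=> s phi psi z [u [u' [v [v' [[h1 h2 h3] [k1 k2 k3] H]]]]].
by exists u, u', v, v'; split => //; split => // n; apply: s.
Qed.

Lemma tclos_cst (A0 : lrel A A) f f' g g' : A0 f f' -> A0 g g' -> tclos ipA A0 f g (ipA f' g).
Proof.
move=> Af Ag; have cst h h' : A0 h h' -> tapprox ipA A0 (fun _ => h) (fun _ => h') h.
  move=> Ah; split => //; first exact/(cvg_inP hA)/(cvgV_cst hA).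
  by move=> e e0; exists 0%N => n m _ _; rewrite !subrr (ip0l hA) normr0 ltcR.
exists (fun _ => f), (fun _ => f'), (fun _ => g), (fun _ => g'); split; try exact: cst.
by move=> e e0; exists 0%N => n _; rewrite subrr normr0 ltcR.
Qed.

Section RepresentedSequence.
Variables (x x' : nat -> A) (y : nat -> B) (phi : A).
Hypothesis cx : cvgV ipA x phi.
Hypothesis rep : forall n m, ipA (x' n) (x m) = c%:C * ipA (x n) (x m) + ipB (y n) (y m).

Lemma tapprox_cauchyP :
  (forall e : R, 0 < e -> exists N, forall n m, (N <= n)%N -> (N <= m)%N ->
     `|ipA (x' n - x' m) (x n - x m)| < e%:C) <-> cauchyV ipB y.
Proof.
have key n m : normc (ipA (x' n - x' m) (x n - x m)) =
    `|c * sqnorm ipA (x n - x m) + sqnorm ipB (y n - y m)|.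
  rewrite -normc_real; congr normc.
  rewrite rmorphD rmorphM /= -(ip_sqnorm hA) -(ip_sqnorm hB).
  by rewrite !(ipBl hA, ipBr hA, ipBl hB, ipBr hB) !rep; ring.
have small e : 0 < e -> exists N, forall n m, (N <= n)%N -> (N <= m)%N ->
    `|c| * sqnorm ipA (x n - x m) < e / 2%:R.
  move=> e0; have c1 : 0 < `|c| + 1 by have := normr_ge0 c; lra.
  have e2 : 0 < e / 2%:R / (`|c| + 1) by rewrite !divr_gt0 ?ltr0n.
  have [N hN] := cvgV_cauchy hA cx e2; exists N => n m /hN /[apply] b.
  have h1 : e / 2%:R / (`|c| + 1) * (`|c| + 1) = e / 2%:R by rewrite divfK // gt_eqF.
  have := sqnorm_ge0 hA (x n - x m); have := normr_ge0 c.
  by move: (sqnorm ipA _) (`|c|) b h1 => s a b h1; nra.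
have est n m : sqnorm ipB (y n - y m) <=
      normc (ipA (x' n - x' m) (x n - x m)) + `|c| * sqnorm ipA (x n - x m) /\
    normc (ipA (x' n - x' m) (x n - x m)) <=
      `|c| * sqnorm ipA (x n - x m) + sqnorm ipB (y n - y m).
  rewrite key; set s := sqnorm ipA _; set t := sqnorm ipB _.
  have s0 : 0 <= s := sqnorm_ge0 hA _; have t0 : 0 <= t := sqnorm_ge0 hB _.
  split; last by have := ler_normD (c * s) t; rewrite normrM (ger0_norm s0) (ger0_norm t0).
  have := ler_normD (c * s + t) (- (c * s)).
  by rewrite [_ + - _]addrC addKr normrN normrM (ger0_norm s0) (ger0_norm t0).
have half (e : R) : e / 2%:R * 2%:R = e by rewrite divfK // pnatr_eq0.
have half_gt0 (e : R) : 0 < e -> 0 < e / 2%:R by move=> e0; rewrite divr_gt0 ?ltr0n.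
split=> H e e0; have [N1 h1] := small e e0; have [N2 h2] := H _ (half_gt0 _ e0);
  exists (maxn N1 N2) => n m; rewrite !geq_max => /andP[n1 n2] /andP[m1 m2];
  have := h1 _ _ n1 m1; have := h2 _ _ n2 m2; have [] := est n m;
  have := half e; rewrite ?ltC_normc; lra.
Qed.

Lemma tapprox_of_rep (A0 : lrel A A) : (forall n, A0 (x n) (x' n)) ->
  cauchyV ipB y -> tapprox ipA A0 x x' phi.
Proof. by move=> Ax cy; split => //; [exact/(cvg_inP hA) | exact/tapprox_cauchyP]. Qed.

End RepresentedSequence.

Lemma tclos_of_rep (A0 : lrel A A) (x x' v v' : nat -> A) (y y' : nat -> B) phi psi wp wq :
  (forall n, A0 (x n) (x' n)) -> (forall n, A0 (v n) (v' n)) ->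
  cvgV ipA x phi -> cvgV ipA v psi -> cvgV ipB y wp -> cvgV ipB y' wq ->
  (forall n m, ipA (x' n) (x m) = c%:C * ipA (x n) (x m) + ipB (y n) (y m)) ->
  (forall n m, ipA (v' n) (v m) = c%:C * ipA (v n) (v m) + ipB (y' n) (y' m)) ->
  (forall n, ipA (x' n) (v n) = c%:C * ipA (x n) (v n) + ipB (y n) (y' n)) ->
  tclos ipA A0 phi psi (c%:C * ipA phi psi + ipB wp wq).
Proof.
move=> Ax Av cx cv cy cy' repx repv repxv; exists x, x', v, v'; split.
- exact: tapprox_of_rep cx repx _ Ax (cvgV_cauchy hB cy).
- exact: tapprox_of_rep cv repv _ Av (cvgV_cauchy hB cy').
- move=> e /(cvgCD (cvgCMl c%:C (ip_cvg hA cx cv)) (ip_cvg hB cy cy')) [N hN].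
  by exists N => n /hN; rewrite repxv ltC_normc.
Qed.

Lemma tapprox_radd_comp T X u u' phi : linrel T -> closed_rel ipA ipB T ->
  releq X (adj ipA ipB T) -> tapprox ipA (radd c (rcomp X T)) u u' phi ->
  exists (w : nat -> B) wl, [/\ forall n, T (u n) (w n) /\ X (w n) (u' n - c%:C *: u n),
    cvgV ipB w wl & rreg ipB T phi wl].
Proof.
move=> lT cT eX [Au /(cvg_inP hA) cu cau].
have ex n : exists w, T (u n) w /\ X w (u' n - c%:C *: u n).
  by have [g [[w [Tw Xw]] ->]] := Au n; exists w; rewrite addrK.
pose w n := proj1_sig (boolp.cid (ex n)).
have Hw n : T (u n) (w n) /\ X (w n) (u' n - c%:C *: u n) by rewrite /w; case: (boolp.cid _).
have rep n m : ipA (u' n) (u m) = c%:C * ipA (u n) (u m) + ipB (w n) (w m).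
  by rewrite (adj_ip_swap eX (proj2 (Hw n)) (proj1 (Hw m))) (ipBl hA) (ipZl hA); ring.
have [wl cw] := cvgV_complete hB ((tapprox_cauchyP cu rep).1 cau).
exists w, wl; split => //; apply: (closed_rreg hB lT cT (u := u) (v := w)) => // n.
apply: rreg_intro (proj1 (Hw n)) _ => // m Tm.
by rewrite (ipC hB) (adj_orth_mul hA ((eX _ _).1 (proj2 (Hw n))) Tm) rmorph0.
Qed.

Lemma tclos_radd_comp_sub T X : linrel T -> closed_rel ipA ipB T ->
  releq X (adj ipA ipB T) -> form_sub (tclos ipA (radd c (rcomp X T))) (rreg_form T).
Proof.
move=> lT cT eX phi psi z [u [u' [v [v' [tu tv hz]]]]].
have [w [wl [Hw cw rw]]] := tapprox_radd_comp lT cT eX tu.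
have [w' [wl' [Hw' cw' rw']]] := tapprox_radd_comp lT cT eX tv.
have [_ /(cvg_inP hA) cu _] := tu; have [_ /(cvg_inP hA) cv _] := tv.
exists wl, wl'; split => //; apply: (cvgC_unique (a := fun n => ipA (u' n) (v n))).
  by move=> e /hz [N hN]; exists N => n /hN; rewrite ltC_normc.
apply: eq_cvgC (cvgCD (cvgCMl c%:C (ip_cvg hA cu cv)) (ip_cvg hB cw cw')) => n.
by rewrite (adj_ip_swap eX (proj2 (Hw n)) (proj1 (Hw' n))) (ipBl hA) (ipZl hA); ring.
Qed.

Lemma rreg_form_sub_tclos T : linrel T -> closed_rel ipA ipB T ->
  form_sub (rreg_form T) (tclos ipA (radd c (rcomp (adj ipA ipB T) T))).
Proof.
move=> lT cT phi psi z [wp [wq [rp rq ->]]].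
have [x [y [Txy cx cy]]] := rreg_approx hA hB lT cT rp.
have [v [y' [Tvy cv cy']]] := rreg_approx hA hB lT cT rq.
pose k n := proj1_sig (boolp.cid (proj2 (Txy n))).
pose k' n := proj1_sig (boolp.cid (proj2 (Tvy n))).
have Hk n : adj ipA ipB T (y n) (k n) by rewrite /k; case: (boolp.cid _).
have Hk' n : adj ipA ipB T (y' n) (k' n) by rewrite /k'; case: (boolp.cid _).
have rep (a1 a2 : nat -> A) (b1 b2 : nat -> B) (l : nat -> A) n m :
    adj ipA ipB T (b1 n) (l n) -> T (a2 m) (b2 m) ->
    ipA (l n + c%:C *: a1 n) (a2 m) = c%:C * ipA (a1 n) (a2 m) + ipB (b1 n) (b2 m).
  move=> H1 H2; rewrite (ipDl hA) (ipZl hA) addrC.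
  by rewrite (adj_ip_swap (fun _ _ => iff_refl _) H1 H2).
apply: (tclos_of_rep (x' := fun n => k n + c%:C *: x n) (v' := fun n => k' n + c%:C *: v n)
  _ _ cx cv cy cy') => [n|n|n m|n m|n].
- by exists (k n); split => //; exists (y n); split => //; case: (Txy n).
- by exists (k' n); split => //; exists (y' n); split => //; case: (Tvy n).
- exact: rep (Hk n) (proj1 (Txy m)).
- exact: rep (Hk' n) (proj1 (Tvy m)).
- exact: rep (Hk n) (proj1 (Tvy n)).
Qed.

End Forms.

Definition rrestrict (A B : Type) (D : A -> Prop) (T : lrel A B) : lrel A B :=
  fun f g => D f /\ T f g.

Lemma selfadjoint_maximal (R : realType) (A : lmodType R[i]) (ipA : A -> A -> R[i])
  (H A0 : lrel A A) :
  selfadjoint ipA H -> relsub H A0 -> relsub A0 (adj ipA ipA A0) -> releq H A0.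
Proof.
move=> sa HA sym f g; split; first exact: HA.
by move=> /sym Af; apply/sa => x y /HA; apply: Af.
Qed.

Lemma selfadjoint_releq (R : realType) (A : lmodType R[i]) (ipA : A -> A -> R[i])
  (T1 T2 : lrel A A) : releq T1 T2 -> selfadjoint ipA T1 -> selfadjoint ipA T2.
Proof.
move=> e sa f g; rewrite -e sa.
by split=> H x y Txy; apply: H; apply/e.
Qed.

Section Restriction.
Variable R : realType.
Local Notation C := R[i].
Variables (A B : lmodType C) (ipA : A -> A -> C) (ipB : B -> B -> C).
Hypotheses (hA : is_hilbert ipA) (hB : is_hilbert ipB).
Variable c : R.

Lemma operator_rrestrict_rreg (L : lrel A A) (T : lrel A B) : linrel L -> linrel T ->
  operator (rrestrict (rdom L) (rreg ipB T)).
Proof.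
move=> [L0 LD LZ] lT; have [RJ0 RJD RJZ] := linrel_rreg hB lT.
split; last by move=> g [_ r]; exact: (rreg_mul0 hB lT r).
split; first by split => //; exists 0.
- move=> f g f' g' [[h1 H1] r1] [[h2 H2] r2].
  by split; [exists (h1 + h2); apply: LD | exact: RJD].
- by move=> a f g [[h1 H1] r1]; split; [exists (a *: h1); apply: LZ | exact: RJZ].
Qed.

Lemma rreg_adj_adj_sub (T1 T2 : lrel A B) : linrel T1 -> linrel T2 ->
  closed_rel ipA ipB T2 -> relsub T1 (rreg ipB T2) ->
  relsub (rreg ipB (adj ipB ipA (adj ipA ipB T1))) (rreg ipB T2).
Proof.
move=> lT1 lT2 cT2 T12 phi w rw.
have [x [y [Txy cx cy]]] := adj_adj_approx hA hB lT1 (rreg_sub (linrel_adj hB hA _) rw).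
apply: rreg_intro => //.
  by apply: (cT2 x y) => // n; apply: (rreg_sub lT2); exact: T12.
move=> m Tm; apply: (ip_lim_eq0 hB cy) => n.
exact: (rreg_orth (T12 _ _ (Txy n)) Tm).
Qed.

Lemma sub_radd_comp_rrestrict (H : lrel A A) (T : lrel A B) :
  linrel T -> closed_rel ipA ipB T ->
  form_sub (tclos ipA H) (tclos ipA (radd c (rcomp (adj ipA ipB T) T))) ->
  relsub H (radd c (rcomp (adj ipA ipB (rrestrict (rdom H) (rreg ipB T)))
    (adj ipB ipA (adj ipA ipB (rrestrict (rdom H) (rreg ipB T)))))).
Proof.
move=> lT cT HK f f' Hf.
have reg_of g g' : H g g' -> rreg_form ipA ipB c T f g (ipA f' g).
  by move=> Hg; apply: (tclos_radd_comp_sub hA hB lT cT (fun _ _ => iff_refl _));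
    apply: HK; apply: tclos_cst Hf Hg.
have [wf [_ [rf _ _]]] := reg_of _ _ Hf.
exists (f' - c%:C *: f); split; last by rewrite subrK.
exists wf; split; first by apply: (sub_adj_adj hA hB); split; [exists f' | ].
move=> g r [[g' Hg] rg]; have [wa [wb [ra rb ez]]] := reg_of _ _ Hg.
rewrite -(rreg_uniq hB lT ra rf) -(rreg_uniq hB lT rb rg).
rewrite (ipC hB wa wb) (ipBr hA) (ipZr hA) conj_realC.
have -> : ipB wa wb = ipA f' g - c%:C * ipA f g by rewrite ez; ring.
by rewrite rmorphB rmorphM /= conj_realC -!(ipC hA).
Qed.

End Restriction.

Section Companion.
Variable R : realType.
Local Notation C := R[i].
Variables (Hs Kc : lmodType C) (ipH : Hs -> Hs -> C) (ipK : Kc -> Kc -> C).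
Hypotheses (hH : is_hilbert ipH) (hK : is_hilbert ipK).
Variables (S : lrel Hs Hs) (c : R) (Q : lrel Hs Kc).
Hypothesis hQ : representing_map ipH ipK S c Q.
Local Notation J := (companion S c Q).
Local Notation radd_adj_comp Rc :=
  (radd c (rcomp (adj ipH ipK Rc) (adj ipK ipH (adj ipH ipK Rc)))).

Lemma representing_map_dom phi q : Q phi q -> exists phi', S phi phi'.
Proof. by have [_ domQ _] := hQ => Qq; apply/domQ; exists q. Qed.

Lemma sub_adj_companion : relsub Q (adj ipK ipH J).
Proof.
have [_ _ rep] := hQ; move=> phi q Qq q' x [psi [psi' [Spsi Qpsi ->]]].
have [phi' Sphi] := representing_map_dom Qq.
by rewrite (ipBl hH) (ipZl hH) (rep _ _ _ _ _ Spsi Qpsi Qq); ring.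
Qed.

Lemma representing_map_orth_mul phi q m :
  Q phi q -> rmul (adj ipK ipH J) m -> ipK q m = 0.
Proof.
move=> Qq Jm; have [phi' Sphi] := representing_map_dom Qq.
by rewrite -(Jm q (phi' - c%:C *: phi)) ?(ip0r hH) //; exists phi, phi'.
Qed.

Lemma sub_rreg_adj_companion : relsub Q (rreg ipK (adj ipK ipH J)).
Proof.
move=> phi q Qq; apply: rreg_intro (sub_adj_companion Qq) _.
  exact: linrel_adj.
by move=> m; apply: representing_map_orth_mul Qq.
Qed.

Lemma sub_radd_adj_comp Rc : relsub Q Rc -> relsub Rc (rreg ipK (adj ipK ipH J)) ->
  relsub S (radd_adj_comp Rc).
Proof.
have [_ domQ _] := hQ; move=> QR RJ phi phi' Sphi.
have [q Qq] : rdom Q phi by apply/domQ; exists phi'.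
exists (phi' - c%:C *: phi); split; last by rewrite subrK.
exists q; split; first exact: (sub_adj_adj hH hK (QR _ _ Qq)).
move=> f r /RJ [g [p [Jg Jp -> _]]].
rewrite (ipBl hK) (ipC hK q p) (representing_map_orth_mul Qq Jp) rmorph0 subr0.
by rewrite (ipC hK q g) -(Jg q (phi' - c%:C *: phi)) -?(ipC hH) //; exists phi, phi'.
Qed.

Lemma friedrichs_form_sub (H : lrel Hs Hs) : relsub S H ->
  form_sub (tclos ipH (friedrichs ipH ipK c Q)) (tclos ipH H).
Proof.
have [[lQ _] domQ rep] := hQ; move=> SH phi psi z.
have eX := fun f g => iff_sym (adj_adj_adj hH hK Q f g).
move=> /(tclos_radd_comp_sub hH hK (linrel_adj hK hH _) (closed_adj hK hH (T := _)) eX).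
move=> [wp [wq [rp rq ->]]].
have [x [y [Qxy cx cy]]] := adj_adj_approx hH hK lQ (rreg_sub (linrel_adj hK hH _) rp).
have [v [y' [Qvy cv cy']]] := adj_adj_approx hH hK lQ (rreg_sub (linrel_adj hK hH _) rq).
have Sx n : exists x', S (x n) x' by apply/domQ; exists (y n).
have Sv n : exists v', S (v n) v' by apply/domQ; exists (y' n).
pose x' n := proj1_sig (boolp.cid (Sx n)); pose v' n := proj1_sig (boolp.cid (Sv n)).
have Sxx' n : S (x n) (x' n) by rewrite /x'; case: (boolp.cid _).
have Svv' n : S (v n) (v' n) by rewrite /v'; case: (boolp.cid _).
apply: (tclos_of_rep hH hK (x' := x') (v' := v') _ _ cx cv cy cy') => [n|n|n m|n m|n].
- exact: SH.
- exact: SH.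
- exact: rep _ _ _ _ _ (Sxx' n) (Qxy n) (Qxy m).
- exact: rep _ _ _ _ _ (Svv' n) (Qvy n) (Qvy m).
- exact: rep _ _ _ _ _ (Sxx' n) (Qxy n) (Qvy n).
Qed.

Lemma factorization_intermediate_extension Rc (H : lrel Hs Hs) :
  operator Rc -> relsub Q Rc -> relsub Rc (rreg ipK (adj ipK ipH J)) ->
  releq H (radd_adj_comp Rc) ->
  [/\ selfadjoint ipH H, relsub S H, bounded_below_by ipH H c,
      form_sub (tclos ipH (friedrichs ipH ipK c Q)) (tclos ipH H)
    & form_sub (tclos ipH H) (tclos ipH (krein ipH ipK c J))].
Proof.
move=> [lR _] QR RJ eH.
have eX := fun f g => iff_sym (adj_adj_adj hH hK Rc f g).
have lT := linrel_adj hK hH (adj ipH ipK Rc).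
have cT := closed_adj hK hH (T := adj ipH ipK Rc).
have SH : relsub S H by move=> f g /(sub_radd_adj_comp QR RJ) /eH.
split => //.
- apply: selfadjoint_releq (fun f g => iff_sym (eH f g)) _.
  exact (selfadjoint_radd_comp hH hK c lT cT eX).
- by move=> f g /eH; apply: (radd_comp_bounded_below hH hK eX).
- exact: friedrichs_form_sub.
- move=> phi psi z /(tclos_sub (fun f g => proj1 (eH f g))).
  move=> /(tclos_radd_comp_sub hH hK lT cT eX) [wp [wq [rp rq ->]]].
  have lJ := linrel_adj hK hH J; have cJ := closed_adj hK hH (T := J).
  have sub := rreg_adj_adj_sub hH hK lR lJ cJ RJ.
  by apply: (rreg_form_sub_tclos hH hK lJ cJ); exists wp, wq; split; try apply: sub.
Qed.

Lemma intermediate_extension_factorization (H : lrel Hs Hs) :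
  selfadjoint ipH H -> relsub S H ->
  form_sub (tclos ipH H) (tclos ipH (krein ipH ipK c J)) ->
  exists Rc, [/\ operator Rc, relsub Q Rc, relsub Rc (rreg ipK (adj ipK ipH J))
    & releq H (radd_adj_comp Rc)].
Proof.
move=> sa SH HK; set Rc := rrestrict (rdom H) (rreg ipK (adj ipK ipH J)).
have lH : linrel H := releq_linrel (fun f g => iff_sym (sa f g)) (linrel_adj hH hH H).
have lJ := linrel_adj hK hH J; have cJ := closed_adj hK hH (T := J).
exists Rc; split.
- exact: operator_rrestrict_rreg.
- move=> phi q Qq; split; last exact: sub_rreg_adj_companion.
  by have [phi' Sphi] := representing_map_dom Qq; exists phi'; apply: SH.
- by move=> f r [].
- apply: (selfadjoint_maximal sa (sub_radd_comp_rrestrict hH hK lJ cJ HK)).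
  exact: (radd_comp_sym hH hK (fun f g => iff_sym (adj_adj_adj hH hK Rc f g))).
Qed.

End Companion.

Theorem lemma7p2 (R : realType)
  (Hs : lmodType R[i]) (ipH : Hs -> Hs -> R[i]) (hH : is_hilbert ipH)
  (Kc : lmodType R[i]) (ipK : Kc -> Kc -> R[i]) (hK : is_hilbert ipK)
  (S : lrel Hs Hs) (hS : linrel S) (gamma : R) (hgamma : lower_bound ipH S gamma)
  (c : R) (hc : c <= gamma)
  (Q : lrel Hs Kc) (hQ : representing_map ipH ipK S c Q)
  (H : lrel Hs Hs) :
  let J := companion S c Q in
  ([/\ selfadjoint ipH H, relsub S H, bounded_below_by ipH H c,
       form_sub (tclos ipH (friedrichs ipH ipK c Q)) (tclos ipH H)
     & form_sub (tclos ipH H) (tclos ipH (krein ipH ipK c J))])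
  <->
  (exists Rc : lrel Hs Kc,
     [/\ operator Rc, relsub Q Rc, relsub Rc (rreg ipK (adj ipK ipH J))
       & releq H (radd c (rcomp (adj ipH ipK Rc) (adj ipK ipH (adj ipH ipK Rc))))]).
Proof.
move=> J; split.
- by case=> sa SH _ _ HK; exact: intermediate_extension_factorization.
- by case=> Rc [opR QR RJ eH]; exact: factorization_intermediate_extension opR QR RJ eH.
Qed.
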